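(* Let $d\geq 1$ be an integer and let $\mathbb{C}^{d(d+1)/2}$ denote the complex vector space whose coordinates are indexed by the pairs $(i,j)$ of integers with $0\leq i<j\leq d$. Define $\phi:(\mathbb{C}^\times)^{d+1}\to\mathbb{C}^{d(d+1)/2}$ by \[ \phi(w_0,\dots,w_d)=\left(\frac{w_i}{w_j}+\frac{w_j}{w_i}\right)_{0\leq i<j\leq d}. \] In the polynomial ring $\mathbb{C}[X_{i,j}\mid 0\leq i<j\leq d]$, write $X_{j,i}=X_{i,j}$, and let $I$ be the ideal generated by the polynomials \[ g(X_{i,j},X_{j,k},X_{i,k})\quad\text{for all pairwise distinct } i,j,k\in\{0,\dots,d\}, \] \[ h(X_{i,j},X_{i,k},X_{i,\ell},X_{j,k},X_{j,\ell},X_{k,\ell})\quad\text{for all pairwise distinct } i,j,k,\ell\in\{0,\dots,d\}. \] Then the image of $\phi$ coincides with the set of common zeros of $I$ in $\mathbb{C}^{d(d+1)/2}$.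
   Context: Here $g(X,Y,Z)=X^2+Y^2+Z^2-XYZ-4$ and \[ h(X_{0,1},X_{0,2},X_{0,3},X_{1,2},X_{1,3},X_{2,3})=\det\begin{bmatrix}2&X_{0,1}&X_{0,2}\\ X_{0,1}&2&X_{1,2}\\ X_{0,3}&X_{1,3}&X_{2,3}\end{bmatrix}. \] *)

From HB Require Import structures.
From mathcomp Require Import all_boot all_order all_algebra.
From mathcomp Require Import complex Rstruct.
Set Implicit Arguments. Unset Strict Implicit. Unset Printing Implicit Defensive.
Import Order.TTheory GRing.Theory Num.Theory.
Local Open Scope ring_scope.

Definition CC : closedFieldType := (Rdefinitions.R)[i].

Definition pairs (d : nat) := {p : 'I_d.+1 * 'I_d.+1 | (p.1 < p.2)%N}.

Definition point (d : nat) := {ffun pairs d -> CC}.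

(* Coordinate X_{i,j} with the convention X_{j,i} = X_{i,j}
   (value 0 on the diagonal, which is never used). *)
Definition coord (d : nat) (x : point d) (i j : 'I_d.+1) : CC :=
  match @insub _ (fun p : 'I_d.+1 * 'I_d.+1 => (p.1 < p.2)%N) (pairs d) (i, j) with
  | Some p => x p
  | None =>
    match @insub _ (fun p : 'I_d.+1 * 'I_d.+1 => (p.1 < p.2)%N) (pairs d) (j, i) with
    | Some p => x p
    | None => 0
    end
  end.

Definition phi (d : nat) (w : 'I_d.+1 -> CC) : point d :=
  [ffun p : pairs d => w (val p).1 / w (val p).2 + w (val p).2 / w (val p).1].

Definition g (X Y Z : CC) : CC := X ^+ 2 + Y ^+ 2 + Z ^+ 2 - X * Y * Z - 4.

Definition hmx (x01 x02 x03 x12 x13 x23 : CC) : 'M[CC]_3 :=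
  \matrix_(r < 3, c < 3)
    nth 0 (nth [::] [:: [:: 2; x01; x02]; [:: x01; 2; x12]; [:: x03; x13; x23]] r) c.

Definition h (x01 x02 x03 x12 x13 x23 : CC) : CC := \det (hmx x01 x02 x03 x12 x13 x23).

Definition in_zero_locus_I (d : nat) (x : point d) : Prop :=
  (forall i j k : 'I_d.+1, i != j -> j != k -> i != k ->
     g (coord x i j) (coord x j k) (coord x i k) = 0) /\
  (forall i j k l : 'I_d.+1,
     i != j -> i != k -> i != l -> j != k -> j != l -> k != l ->
     h (coord x i j) (coord x i k) (coord x i l)
       (coord x j k) (coord x j l) (coord x k l) = 0).

From Pilot Require Import Defs.
From HB Require Import structures.
From mathcomp Require Import all_boot all_order all_algebra.
From mathcomp Require Import complex Rstruct.
From mathcomp Require Import ring.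
Import Order.TTheory GRing.Theory Num.Theory.
Local Open Scope ring_scope.

(* Normalise w_0 = 1 and choose w_j with w_j + 1/w_j = x_{0j}.  The relation g
   on the triangle (0, j, k) leaves two candidates for x_{jk}, namely
   phi-values of (w_j, w_k) and (w_j, 1/w_k).  If some x_{0m}^2 <> 4, invert
   each w_j so that the pair (m, j) matches; then h on (0, m, j, k) is affine in
   x_{jk} with slope 4 - x_{0m}^2 <> 0, so x_{jk} is forced.  Otherwise every
   w_j = ±1 and the two candidates coincide. *)

Definition ratio_sum {F : fieldType} (a b : F) : F := a / b + b / a.

Section RatioSum.
Variable F : fieldType.
Implicit Types a b : F.

Lemma ratio_sumC a b : ratio_sum a b = ratio_sum b a.
Proof. by rewrite /ratio_sum addrC. Qed.

Lemma ratio_sum1r a : ratio_sum a 1 = a + a^-1.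
Proof. by rewrite /ratio_sum divr1 div1r. Qed.

Lemma ratio_sumV1 a : ratio_sum a^-1 1 = ratio_sum a 1.
Proof. by rewrite !ratio_sum1r invrK addrC. Qed.

Lemma invr_ratio_sum1_sqr4 a : a != 0 -> (ratio_sum a 1) ^+ 2 = 4 -> a^-1 = a.
Proof.
move=> a0 sq4; apply/esym/eqP; rewrite -subr_eq0.
have : (a - a^-1) ^+ 2 == 0.
  have -> : (a - a^-1) ^+ 2 = (ratio_sum a 1) ^+ 2 - 4 by rewrite ratio_sum1r; field.
  by rewrite sq4 subrr.
by rewrite expf_eq0.
Qed.

End RatioSum.

Lemma exists_ratio_sum1_root {F : closedFieldType} (c : F) :
  exists s : F, (s != 0) && (ratio_sum s 1 == c).
Proof.
have [s s_root] := @solve_monicpoly F 2 (nth 0 [:: -1; c]) isT.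
rewrite !big_ord_recl big_ord0 /= expr0 expr1 addr0 mulr1 in s_root.
have s0 : s != 0.
  apply/eqP => s0; move: s_root; rewrite s0 expr0n /= mulr0 addr0 => /eqP.
  by rewrite eq_sym oppr_eq0 oner_eq0.
exists s; rewrite s0 /=; apply/eqP.
have -> : ratio_sum s 1 = (s ^+ 2 + 1) / s by rewrite ratio_sum1r; field.
by rewrite s_root; field.
Qed.

Definition ratio_sum1_root {F : closedFieldType} (c : F) : F :=
  xchoose (exists_ratio_sum1_root c).

Lemma ratio_sum1_root_neq0 {F : closedFieldType} (c : F) : ratio_sum1_root c != 0.
Proof. by have /andP[] := xchooseP (exists_ratio_sum1_root c). Qed.

Lemma ratio_sum1_rootK {F : closedFieldType} (c : F) :
  ratio_sum (ratio_sum1_root c) 1 = c.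
Proof. by have /andP[_ /eqP] := xchooseP (exists_ratio_sum1_root c). Qed.

Lemma h_expand a b c d e f :
  h a b c d e f = 2 * (2 * f - d * e) - a * (a * f - d * c) + b * (a * e - 2 * c).
Proof.
rewrite /h (expand_det_row _ ord0) !big_ord_recl big_ord0.
rewrite /cofactor !(expand_det_row _ ord0) !big_ord_recl big_ord0 /cofactor.
rewrite !det_mx11 !mxE /= !big_ord0 /bump /= !expr0 ?expr1 ?expr2; ring.
Qed.

Lemma h_last_unique {a b c d e X Y} : a ^+ 2 != 4 ->
  h a b c d e X = 0 -> h a b c d e Y = 0 -> X = Y.
Proof.
move=> a4 hX hY.
have : (4 - a ^+ 2) * (X - Y) = 0.
  by rewrite -[0](subrr 0) -{1}hX -hY !h_expand; ring.
by move/eqP; rewrite mulf_eq0 subr_eq0 eq_sym (negPf a4) subr_eq0 => /eqP.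
Qed.

Lemma g_ratio_sum (a b c : CC) : a != 0 -> b != 0 -> c != 0 ->
  g (ratio_sum a b) (ratio_sum b c) (ratio_sum a c) = 0.
Proof. by move=> a0 b0 c0; rewrite /g /ratio_sum; field; rewrite a0 b0 c0. Qed.

Lemma h_ratio_sum (a b c e : CC) : a != 0 -> b != 0 -> c != 0 -> e != 0 ->
  h (ratio_sum a b) (ratio_sum a c) (ratio_sum a e)
    (ratio_sum b c) (ratio_sum b e) (ratio_sum c e) = 0.
Proof.
by move=> a0 b0 c0 e0; rewrite h_expand /ratio_sum; field; rewrite a0 b0 c0 e0.
Qed.

Lemma g_ratio_sum1_cases (a b Y : CC) : a != 0 -> b != 0 ->
  g (ratio_sum a 1) Y (ratio_sum b 1) = 0 ->
  Y = ratio_sum a b \/ Y = ratio_sum a b^-1.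
Proof.
move=> a0 b0 gY.
have : (Y - ratio_sum a b) * (Y - ratio_sum a b^-1) = 0.
  by rewrite -gY /g /ratio_sum; field; rewrite a0 b0.
by move/eqP; rewrite mulf_eq0 !subr_eq0 => /orP[/eqP|/eqP]; [left|right].
Qed.

Local Notation coord := Defs.coord.

Section Coordinates.
Variable d : nat.
Implicit Types (x : point d) (w : 'I_d.+1 -> CC).

Lemma coord_phi w i j : i != j -> coord (phi w) i j = ratio_sum (w i) (w j).
Proof.
move=> ij; rewrite /coord.
case: insubP => [p _ pE|ltNij]; first by rewrite ffunE pE.
case: insubP => [p _ pE|ltNji]; first by rewrite ffunE pE /= ratio_sumC.
move: ltNij ltNji ij; rewrite /= -!leqNgt => leji leij.
by rewrite -val_eqE /= eqn_leq leij leji.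
Qed.

Lemma coord_sym x i j : coord x i j = coord x j i.
Proof.
rewrite /coord.
case: insubP => [p ltij _|_]; case: insubP => [q ltji _|_] //=.
by move: (ltn_trans ltij ltji); rewrite ltnn.
Qed.

Lemma coord_val x (p : pairs d) : coord x (val p).1 (val p).2 = x p.
Proof.
rewrite /coord; case: insubP => [q _ qE|]; last by rewrite (valP p).
by rewrite (_ : q = p) //; apply: val_inj; rewrite qE; case: (val p).
Qed.

Lemma pair_neq (p : pairs d) : (val p).1 != (val p).2.
Proof. by apply/eqP => pE; move: (valP p); rewrite pE ltnn. Qed.

Lemma phi_eq_of_coord x w :
  (forall i j, i != j -> coord x i j = ratio_sum (w i) (w j)) -> phi w = x.
Proof. by move=> xw; apply/ffunP => p; rewrite ffunE -coord_val xw ?pair_neq. Qed.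

Lemma phi_eq_of_coord0 x w : w ord0 = 1 ->
  (forall j, j != ord0 -> coord x ord0 j = ratio_sum (w j) 1) ->
  (forall j k, j != ord0 -> k != ord0 -> j != k ->
     coord x j k = ratio_sum (w j) (w k)) ->
  phi w = x.
Proof.
move=> w0 x0 xw; apply: phi_eq_of_coord => i j ij.
case: (eqVneq i ord0) ij => [-> ij | i0 ij].
  by rewrite w0 ratio_sumC x0 // eq_sym.
case: (eqVneq j ord0) ij => [-> _ | j0 ij]; first by rewrite coord_sym w0 x0.
exact: xw.
Qed.

Lemma zero_locus_phi w : (forall i, w i != 0) -> in_zero_locus_I (phi w).
Proof.
move=> w0; split=> [i j k *|i j k l *]; rewrite !coord_phi //.
  exact: g_ratio_sum.
exact: h_ratio_sum.
Qed.

End Coordinates.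

Section Converse.
Variables (d : nat) (x : point d).
Hypothesis x_g : forall i j k : 'I_d.+1, i != j -> j != k -> i != k ->
  g (coord x i j) (coord x j k) (coord x i k) = 0.
Hypothesis x_h : forall i j k l : 'I_d.+1,
  i != j -> i != k -> i != l -> j != k -> j != l -> k != l ->
  h (coord x i j) (coord x i k) (coord x i l)
    (coord x j k) (coord x j l) (coord x k l) = 0.

Let s j := ratio_sum1_root (coord x ord0 j).

Lemma coord_ratio_sum_cases {j k a b} : j != ord0 -> k != ord0 -> j != k ->
  a != 0 -> b != 0 ->
  coord x ord0 j = ratio_sum a 1 -> coord x ord0 k = ratio_sum b 1 ->
  coord x j k = ratio_sum a b \/ coord x j k = ratio_sum a b^-1.
Proof.
move=> j0 k0 jk a0 b0 ja kb; apply: g_ratio_sum1_cases => //.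
by rewrite -ja -kb x_g // eq_sym.
Qed.

Lemma exists_phi_eq_degenerate :
  (forall m, m != ord0 -> coord x ord0 m ^+ 2 = 4) ->
  exists w : 'I_d.+1 -> CC, (forall i, w i != 0) /\ phi w = x.
Proof.
move=> sq4; pose w j := if j == ord0 then 1 else s j.
have w_neq0 j : w j != 0.
  by rewrite /w; case: ifP; rewrite ?oner_neq0 ?ratio_sum1_root_neq0.
have w_base j : j != ord0 -> coord x ord0 j = ratio_sum (w j) 1.
  by move=> j0; rewrite /w (negPf j0) ratio_sum1_rootK.
have wV j : j != ord0 -> (w j)^-1 = w j.
  by move=> j0; apply: invr_ratio_sum1_sqr4 => //; rewrite -w_base ?sq4.
exists w; split=> //; apply: phi_eq_of_coord0 => [|//|j k j0 k0 jk].
  by rewrite /w eqxx.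
have [-> // | ->] := coord_ratio_sum_cases j0 k0 jk (w_neq0 j) (w_neq0 k)
  (w_base j j0) (w_base k k0).
by rewrite wV.
Qed.

Section Generic.
Variable m : 'I_d.+1.
Hypotheses (m0 : m != ord0) (m4 : coord x ord0 m ^+ 2 != 4).

Let w j := if j == ord0 then 1 else if j == m then s m
  else if coord x m j == ratio_sum (s m) (s j) then s j else (s j)^-1.

Let w_neq0 j : w j != 0.
Proof.
rewrite /w; case: ifP => _; first exact: oner_neq0.
by do 2?case: ifP => _; rewrite ?invr_eq0 ratio_sum1_root_neq0.
Qed.

Let w0 : w ord0 = 1.
Proof. by rewrite /w eqxx. Qed.

Let w_base j : j != ord0 -> coord x ord0 j = ratio_sum (w j) 1.
Proof.
move=> j0; rewrite /w (negPf j0).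
case: ifP => [/eqP -> | _]; first by rewrite ratio_sum1_rootK.
by case: ifP => _; rewrite ?ratio_sumV1 ratio_sum1_rootK.
Qed.

Let w_coord_m j : j != ord0 -> j != m -> coord x m j = ratio_sum (w m) (w j).
Proof.
move=> j0 jm; rewrite {1}/w (negPf m0) eqxx /w (negPf j0) (negPf jm).
case: ifP => [/eqP // | /negbT xmj].
have mj : m != j by rewrite eq_sym.
have [xmjE | //] := coord_ratio_sum_cases m0 j0 mj (ratio_sum1_root_neq0 _)
  (ratio_sum1_root_neq0 _) (esym (ratio_sum1_rootK _)) (esym (ratio_sum1_rootK _)).
by rewrite xmjE eqxx in xmj.
Qed.

Let w_coord j k : j != ord0 -> k != ord0 -> j != m -> k != m -> j != k ->
  coord x j k = ratio_sum (w j) (w k).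
Proof.
move=> j0 k0 jm km jk.
have x0 i : i != ord0 -> coord x ord0 i = ratio_sum (w ord0) (w i).
  by move=> i0; rewrite w0 ratio_sumC w_base.
apply: (h_last_unique m4 (x_h ord0 m j k _ _ _ _ _ _)) => //; try by rewrite eq_sym.
by rewrite (x0 m) // (x0 j) // (x0 k) // !w_coord_m // h_ratio_sum.
Qed.

Lemma exists_phi_eq_generic :
  exists w : 'I_d.+1 -> CC, (forall i, w i != 0) /\ phi w = x.
Proof.
exists w; split=> //; apply: phi_eq_of_coord0 => // j k j0 k0 jk.
have [jm | jm] := eqVneq j m; first by rewrite jm w_coord_m // -jm eq_sym.
have [km | km] := eqVneq k m; first by rewrite km coord_sym ratio_sumC w_coord_m.
exact: w_coord.
Qed.

End Generic.

End Converse.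

Theorem theorem2p5 (d : nat) (hd : (1 <= d)%N) (x : point d) :
  (exists w : 'I_d.+1 -> CC, (forall i, w i != 0) /\ phi w = x) <->
  in_zero_locus_I x.
Proof.
split=> [[w [w_neq0 <-]] | [x_g x_h]]; first exact: zero_locus_phi.
have [/existsP[m /andP[m0 m4]] | /existsPn all4] :=
  boolP [exists m, (m != ord0) && (coord x ord0 m ^+ 2 != 4)].
  exact: exists_phi_eq_generic x_g x_h m m0 m4.
apply: exists_phi_eq_degenerate x_g _ => m m0.
by apply/eqP; move: (all4 m); rewrite m0 negbK.
Qed.
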